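(* Let $$A=\begin{pmatrix} 0 & z & -y\\ -z & 0 & x\\ y & -x & 0\end{pmatrix}$$ be a matrix over the polynomial ring $\mathbb{R}[x,y,z]$. Then $A$ is not algebraically shift equivalent over $\mathbb{R}[x,y,z]$ to any nonsingular square matrix over $\mathbb{R}[x,y,z]$. In particular, $A$ is a non-nilpotent matrix over $\mathbb{R}[x,y,z]=\mathbb{R}[x][y,z]$ that is not algebraically shift equivalent to a nonsingular matrix.
   Context: A square matrix over the domain $\mathbb{R}[x,y,z]$ is nonsingular if its determinant is nonzero. Two square matrices $A$ (of order $p$) and $B$ (of order $q$) over a commutative ring $R$ are algebraically shift equivalent of lag $l\in\mathbb{N}$ over $R$ if there exist a $p\times q$ matrix $U$ and a $q\times p$ matrix $V$ over $R$ with $AU=UB$, $VA=BV$, $A^l=UV$ and $B^l=VU$; they are algebraically shift equivalent if this holds for some $l\in\mathbb{N}$. *)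

(* real numbers as an abstract [realType] (the complete
   archimedean ordered field, i.e. R up to isomorphism), polynomial ring
   R[x,y,z] as multinomials' {mpoly R[3]}. *)
From HB Require Import structures.
From mathcomp Require Import all_boot all_order all_algebra.
From mathcomp Require Import reals.
From mathcomp Require Import mpoly.
Set Implicit Arguments. Unset Strict Implicit. Unset Printing Implicit Defensive.
Import Order.TTheory GRing.Theory Num.Theory.
Local Open Scope ring_scope.

Definition alg_shift_equiv_lag (S : comNzRingType) (p q : nat)
  (A : 'M[S]_p) (B : 'M[S]_q) (l : nat) : Prop :=
  exists (U : 'M[S]_(p, q)) (V : 'M[S]_(q, p)),
    [/\ A *m U = U *m B, V *m A = B *m V, A ^+ l = U *m V & B ^+ l = V *m U].

Definition alg_shift_equiv (S : comNzRingType) (p q : nat)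
  (A : 'M[S]_p) (B : 'M[S]_q) : Prop :=
  exists l : nat, alg_shift_equiv_lag A B l.

Definition nonsingular (S : comNzRingType) (q : nat) (B : 'M[S]_q) : bool :=
  \det B != 0.

Definition varx (R : realType) : {mpoly R[3]} := 'X_(inord 0).
Definition vary (R : realType) : {mpoly R[3]} := 'X_(inord 1).
Definition varz (R : realType) : {mpoly R[3]} := 'X_(inord 2).

Definition matA (R : realType) : 'M[{mpoly R[3]}]_3 :=
  let x := varx R in let y := vary R in let z := varz R in
  \matrix_(i < 3, j < 3)
    nth 0 (nth [::] [:: [:: 0; z; - y]; [:: - z; 0; x]; [:: y; - x; 0]] i) j.

(* The row (x, y, z) annihilates A. So if A U = U B and B^l = V U with
   det B <> 0, then over the field of fractions (x, y, z) U = 0 while V U is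
   invertible, whence q <= 2.
   On the other hand A v is the cross product of v with (x, y, z): at a point p
   of the unit sphere, A turns the tangent plane T_p by a right angle J.
   Compressing A^l = U V to T_p gives W(p) Z(p) = J^l, where W(p) is U(p)
   followed by the orthogonal projection onto T_p. Hence q >= 2, and for q = 2
   every W(p) is invertible, so its first column is a nowhere vanishing tangent
   field on the sphere, contradicting the hairy ball theorem, which is proved
   by counting quarter turns of the field along a grid in spherical
   coordinates. The same compression shows that A^k acts as J^k <> 0 on T_p, so
   A is not nilpotent. *)

From HB Require Import structures.
From mathcomp Require Import all_boot all_order all_algebra.
From mathcomp Require Import reals.
From mathcomp Require Import mpoly.
From mathcomp Require Import fraction.
From mathcomp Require Import boolp topology normedtype trigo derive.
From mathcomp Require Import ring lra zify.
Set Implicit Arguments. Unset Strict Implicit. Unset Printing Implicit Defensive.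
Import Order.TTheory GRing.Theory Num.Theory.
Import numFieldNormedType.Exports.
Import archimedean.Num.Theory.
Local Open Scope ring_scope.

Section QuadrantTurns.
Variable R : realFieldType.
Implicit Types u v w z : R * R.

(* Quadrants are numbered counterclockwise from 0 (x > 0, y >= 0) to 3, and
   [turn u v] is the number of quarter turns from the quadrant of [u] to that
   of [v], taken in (-2, 2]. When [dot u v > 0] it is never 2, and it then
   behaves like the winding increment from [u] to [v]. *)
Definition quadrant u : nat :=
  if (0 < u.1) && (0 <= u.2) then 0
  else if (u.1 <= 0) && (0 < u.2) then 1
  else if (u.1 < 0) && (u.2 <= 0) then 2 else 3.

Definition quarter_turns (m n : int) : int :=
  let d := ((n - m) %% 4)%Z in
  if d == 0 then 0 else if d == 1 then 1 else if d == 2 then 2 else -1.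

Definition turn u v : int := quarter_turns (quadrant u) (quadrant v).

Definition dot u v : R := u.1 * v.1 + u.2 * v.2.

Lemma dotC u v : dot u v = dot v u.
Proof. by rewrite /dot mulrC [u.2 * _]mulrC. Qed.

Lemma quadrant_lt4 u : (quadrant u < 4)%N.
Proof. by rewrite /quadrant; repeat case: ifP. Qed.

Variant quadrant_spec u : nat -> Set :=
  | Quadrant0 of 0 < u.1 & 0 <= u.2 : quadrant_spec u 0
  | Quadrant1 of u.1 <= 0 & 0 < u.2 : quadrant_spec u 1
  | Quadrant2 of u.1 < 0 & u.2 <= 0 : quadrant_spec u 2
  | Quadrant3 of 0 <= u.1 & u.2 < 0 : quadrant_spec u 3
  | QuadrantOrigin of u.1 = 0 & u.2 = 0 : quadrant_spec u 3.

Lemma quadrantP u : quadrant_spec u (quadrant u).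
Proof.
rewrite /quadrant; case: ifPn => [/andP[? ?]|]; first exact: Quadrant0.
rewrite negb_and -!ltNge => /orP h0.
case: ifPn => [/andP[? ?]|]; first exact: Quadrant1.
rewrite negb_and -!ltNge => /orP h1.
case: ifPn => [/andP[? ?]|]; first exact: Quadrant2.
rewrite negb_and -!leNgt => /orP h2.
have [?|?] := ltP u.2 0; [apply: Quadrant3 | apply: QuadrantOrigin];
  by case: h0 => ?; case: h1 => ?; case: h2 => ?; lra.
Qed.

Lemma quadrant_eq u (n : nat) :
  [\/ n = 0%N /\ (0 < u.1 /\ 0 <= u.2), n = 1%N /\ (u.1 <= 0 /\ 0 < u.2),
      n = 2%N /\ (u.1 < 0 /\ u.2 <= 0) | n = 3%N /\ (0 <= u.1 /\ u.2 < 0)] ->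
  quadrant u = n.
Proof. by case: quadrantP => ? ? [][-> [? ?]] //; exfalso; lra. Qed.

Lemma quarter_turnsN (m n : nat) : (m < 4)%N -> (n < 4)%N ->
  quarter_turns m n != 2 -> quarter_turns n m = - quarter_turns m n.
Proof. by case: m => [|[|[|[|]]]] //; case: n => [|[|[|[|]]]]. Qed.

Lemma quarter_turns_cycle (m n k : nat) : (m < 4)%N -> (n < 4)%N -> (k < 4)%N ->
  quarter_turns m n != 2 -> quarter_turns n k != 2 -> quarter_turns k m != 2 ->
  quarter_turns m n + quarter_turns n k + quarter_turns k m = 0.
Proof.
by case: m => [|[|[|[|]]]] //; case: n => [|[|[|[|]]]] //; case: k => [|[|[|[|]]]].
Qed.

Lemma turn_neq2 u v : 0 < dot u v -> turn u v != 2.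
Proof.
rewrite /turn /dot => huv.
by case: quadrantP => ? ?; case: quadrantP => ? ? //; exfalso; nra.
Qed.

Lemma turnN u v : 0 < dot u v -> turn v u = - turn u v.
Proof. by move=> huv; apply: quarter_turnsN; rewrite ?quadrant_lt4 ?turn_neq2. Qed.

Lemma turn_cycle u v w : 0 < dot u v -> 0 < dot v w -> 0 < dot w u ->
  turn u v + turn v w + turn w u = 0.
Proof.
by move=> ? ? ?; apply: quarter_turns_cycle; rewrite ?quadrant_lt4 ?turn_neq2.
Qed.

Lemma turn_square u v w z : 0 < dot u v -> 0 < dot v w -> 0 < dot w z ->
  0 < dot z u -> 0 < dot u w ->
  turn u v + turn v w = turn u z + turn z w.
Proof.
move=> huv hvw hwz hzu huw.
have hwu : 0 < dot w u by rewrite dotC.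
have := turn_cycle huv hvw hwu.
have := turn_cycle huw hwz hzu.
rewrite (turnN huw) (turnN hwz) (turnN hzu); lia.
Qed.

(* A discrete homotopy invariance of winding numbers: sampled on a grid
   whose cells have acute corners, the turns along the bottom row equal those
   along the top row when both vertical sides coincide. *)
Lemma grid_turns (N : nat) (P : nat -> nat -> R * R) :
  (forall i j, (i < N)%N -> (j < N)%N ->
    [/\ 0 < dot (P i j) (P i.+1 j), 0 < dot (P i.+1 j) (P i.+1 j.+1),
        0 < dot (P i.+1 j.+1) (P i j.+1), 0 < dot (P i j.+1) (P i j) &
        0 < dot (P i j) (P i.+1 j.+1)]) ->
  (forall j, P N j = P 0%N j) ->
  \sum_(i < N) turn (P i 0%N) (P i.+1 0%N) = \sum_(i < N) turn (P i N) (P i.+1 N).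
Proof.
move=> hcell hper.
pose row j := \sum_(i < N) turn (P i j) (P i.+1 j).
suff: forall j, (j <= N)%N -> row j = row 0%N by move=> /(_ N (leqnn N)).
elim=> [//|j IH] hj; rewrite -IH ?(ltnW hj) //.
apply/eqP; rewrite -subr_eq0 -sumrB.
pose g i := turn (P i j) (P i j.+1).
rewrite (eq_bigr (fun i : 'I_N => g i.+1 - g i)); last first.
  move=> i _; have [h1 h2 h3 h4 h5] := hcell i j (ltn_ord i) hj.
  by have := turn_square h1 h2 h3 h4 h5; rewrite /g; lia.
by rewrite -(big_mkord xpredT (fun i => g i.+1 - g i)) telescope_sumr // /g !hper subrr.
Qed.

Lemma dot_gt0_near (u v : R * R) (e m : R) : 2 * e < m ->
  m <= `|u.1| + `|u.2| -> `|v.1 - u.1| <= e -> `|v.2 - u.2| <= e -> 0 < dot u v.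
Proof.
case: u v => [x1 x2] [y1 y2] /= em m_le d1 d2; rewrite /dot /=.
have e_ge0 : 0 <= e by apply: le_trans d1.
have k1 : - (`|x1| * e) <= x1 * (y1 - x1).
  by rewrite lerNl (le_trans (ler_norm _)) // normrN normrM ler_wpM2l.
have k2 : - (`|x2| * e) <= x2 * (y2 - x2).
  by rewrite lerNl (le_trans (ler_norm _)) // normrN normrM ler_wpM2l.
have -> : x1 * y1 + x2 * y2 = x1 ^+ 2 + x2 ^+ 2 + x1 * (y1 - x1) + x2 * (y2 - x2) by ring.
rewrite -(real_normK (num_real x1)) -(real_normK (num_real x2)).
move: (normr_ge0 x1) (normr_ge0 x2) k1 k2 m_le.
move: `|x1| `|x2| (x1 * (y1 - x1)) (x2 * (y2 - x2)) => X1 X2 d1' d2' X1_ge0 X2_ge0 k1 k2 m_le.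
have S_gt0 : 0 < X1 + X2 by lra.
have S2e_gt0 : 0 < X1 + X2 - 2 * e by lra.
have := mulr_gt0 S_gt0 S2e_gt0 => SSe.
have : e * (X1 + X2) < (X1 + X2) * (X1 + X2) / 2 by nra.
have : (X1 + X2) * (X1 + X2) / 2 <= X1 ^+ 2 + X2 ^+ 2.
  by have := sqr_ge0 (X1 - X2); nra.
lra.
Qed.

End QuadrantTurns.

Lemma periodicz (U V : zmodType) (f : U -> V) (T : U) :
  periodic f T -> forall (m : int) x, f (x + T *~ m) = f x.
Proof.
move=> fT [n|n] x; first exact: periodicn.
by rewrite NegzE mulrNz -{2}[x](subrK (T *+ n.+1)) (periodicn fT).
Qed.

Section CircleTurns.
Variable R : realType.

Lemma pihalf_gt0 : 0 < pi / 2 :> R.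
Proof. by rewrite divr_gt0 // pi_gt0. Qed.

Lemma quadrant_polar (rho t : R) : 0 < rho ->
  (quadrant (rho * cos t, rho * sin t))%:Z = (Num.floor (t / (pi / 2)) %% 4)%Z.
Proof.
move=> rho_gt0; have pi2_gt0 := pihalf_gt0; have pi_gt0 := @pi_gt0 R.
set k := Num.floor (t / (pi / 2)).
have /andP[k_le k_gt] := floor_itv (t / (pi / 2)); rewrite intrD in k_gt.
set s := t - k%:~R * (pi / 2).
have ht : t = (t / (pi / 2)) * (pi / 2) by rewrite divfK // gt_eqF.
have s_ge0 : 0 <= s by rewrite /s {1}ht; nra.
have s_lt : s < pi / 2 by rewrite /s {1}ht; nra.
have cos_gt0 : 0 < cos s by apply: cos_gt0_pihalf; apply/andP; split; lra.
have sin_ge0 : 0 <= sin s by apply: sin_ge0_pi; apply/andP; split; lra.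
have -> : t = s + (k %% 4)%Z%:~R * (pi / 2) + (pi *+ 2) *~ (k %/ 4)%Z.
  rewrite /s {1}(divz_eq k 4) -mulrzl intrD intrM mulr2n.
  have -> : (4%:~R : R) = 4 by [].
  by field.
rewrite (periodicz (@cosD2pi R)) (periodicz (@sinD2pi R)).
have : (0 <= k %% 4)%Z && (k %% 4 < 4)%Z by rewrite modz_ge0 ?ltz_pmod.
case: (k %% 4)%Z => [[|[|[|[|n]]]]|n] //= _.
- rewrite mul0r addr0.
  by rewrite (@quadrant_eq _ _ 0) //; constructor 1; split=> //=; nra.
- rewrite mul1r cosDpihalf sinDpihalf.
  by rewrite (@quadrant_eq _ _ 1) //; constructor 2; split=> //=; nra.
- have -> : 2%:~R * (pi / 2) = pi / 2 + pi / 2 :> R by rewrite -pmulrn; ring.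
  rewrite addrA !cosDpihalf !sinDpihalf cosDpihalf.
  by rewrite (@quadrant_eq _ _ 2) //; constructor 3; split=> //=; nra.
- have -> : 3%:~R * (pi / 2) = pi / 2 + pi / 2 + pi / 2 :> R by rewrite -pmulrn; ring.
  rewrite !addrA !cosDpihalf !sinDpihalf !cosDpihalf opprK sinDpihalf.
  by rewrite (@quadrant_eq _ _ 3) //; constructor 4; split=> //=; nra.
Qed.

Lemma quarter_turns_mod (a b : int) : `|b - a| <= 1 ->
  quarter_turns (a %% 4)%Z (b %% 4)%Z = b - a.
Proof.
move=> hab; rewrite /quarter_turns modzDml -modzDmr modzNm modzDmr.
by have [->|[->|->]] : b - a = -1 \/ b - a = 0 \/ b - a = 1 by lia.
Qed.

Lemma floor_dist_le1 (x y : R) : `|y - x| < 1 -> `|Num.floor y - Num.floor x| <= 1.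
Proof.
have floor_lt2 (a b : R) : `|b - a| < 1 -> Num.floor b < Num.floor a + 2.
  move=> hab; rewrite floor_lt_int intrD.
  have /andP[_ ha] := floor_itv a; rewrite intrD in ha.
  have := ler_norm (b - a); have -> : (2%:~R : R) = 1 + 1 by [].
  lra.
move=> hxy; have := floor_lt2 _ _ hxy.
by have := floor_lt2 y x; rewrite distrC => /(_ hxy); lia.
Qed.

Lemma circle_turns (rho beta c : R) (N : nat) (e : int) : 0 < rho ->
  `|c| < pi / 2 -> N%:R * c = (pi *+ 2) *~ e ->
  \sum_(i < N) turn (rho * cos (beta + i%:R * c), rho * sin (beta + i%:R * c))
      (rho * cos (beta + i.+1%:R * c), rho * sin (beta + i.+1%:R * c)) = 4 * e.
Proof.
move=> rho_gt0 hc hN; have pi2_gt0 := pihalf_gt0.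
pose k (i : nat) := Num.floor ((beta + i%:R * c) / (pi / 2)).
transitivity (\sum_(i < N) (k i.+1 - k i)).
  apply: eq_bigr => i _; rewrite /turn !quadrant_polar // quarter_turns_mod //.
  apply: floor_dist_le1; rewrite -mulrBl normrM [`|(pi / 2)^-1|]gtr0_norm ?invr_gt0 //.
  rewrite ltr_pdivrMr // mul1r.
  by have -> : beta + i.+1%:R * c - (beta + i%:R * c) = c by rewrite -natr1; ring.
rewrite -(big_mkord xpredT (fun i => k i.+1 - k i)) telescope_sumr // /k.
have -> : (beta + N%:R * c) / (pi / 2) = (beta + 0%:R * c) / (pi / 2) + (4 * e)%:~R.
  rewrite hN -mulrzl intrM mulr2n mul0r addr0.
  have -> : (4%:~R : R) = 4 by [].
  by move: (@pi_gt0 R); move: (@pi R) => p p_gt0; field; rewrite gt_eqF.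
by rewrite floorDrz ?intr_int // intrKfloor addrC addKr.
Qed.

End CircleTurns.

Section BoundedLipschitz.
Context {R : realType}.

Lemma ler_dist_derive (f df : R -> R) (k : R) :
  (forall x : R, is_derive x 1 f (df x)) -> continuous f ->
  (forall x, `|df x| <= k) -> forall a b, `|f a - f b| <= k * `|a - b|.
Proof.
move=> f_df f_cont df_le.
suff le_ab a b : a < b -> `|f b - f a| <= k * `|b - a|.
  move=> a b; case: (ltgtP a b) => [ab|ba|->]; last by rewrite !subrr normr0 mulr0.
  - by rewrite distrC [`|a - b|]distrC; apply: le_ab.
  - exact: le_ab.
move=> ab; have [c _ ->] := MVT ab (fun x _ => f_df x) (continuous_subspaceT f_cont).
by rewrite normrM ler_wpM2r.
Qed.

Lemma ler_dist_cos (a b : R) : `|cos a - cos b| <= `|a - b|.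
Proof.
rewrite -[X in _ <= X]mul1r.
apply: (ler_dist_derive (df := fun x => - sin x)); first exact: continuous_cos.
by move=> x; rewrite normrN sin_max.
Qed.

Lemma ler_dist_sin (a b : R) : `|sin a - sin b| <= `|a - b|.
Proof.
rewrite -[X in _ <= X]mul1r.
apply: (ler_dist_derive (df := cos)); first exact: continuous_sin.
exact: cos_max.
Qed.

Definition bdd_lipschitz (f : R -> R -> R) := exists M L : R, [/\ 0 <= M, 0 <= L &
  forall a b a' b', `|f a b| <= M /\ `|f a b - f a' b'| <= L * (`|a - a'| + `|b - b'|)].

Lemma eq_bdd_lipschitz f g : (forall a b, f a b = g a b) ->
  bdd_lipschitz f -> bdd_lipschitz g.
Proof.
move=> fg [M [L [M0 L0 hf]]]; exists M, L; split=> // a b a' b'.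
by rewrite -!fg; apply: hf.
Qed.

Lemma bdd_lipschitz_cst c : bdd_lipschitz (fun _ _ => c).
Proof.
by exists `|c|, 0; split=> // a b a' b'; rewrite subrr normr0 mul0r.
Qed.

Lemma bdd_lipschitzN f : bdd_lipschitz f -> bdd_lipschitz (fun a b => - f a b).
Proof.
move=> [M [L [M0 L0 hf]]]; exists M, L; split=> // a b a' b'.
by rewrite normrN -opprD normrN; apply: hf.
Qed.

Lemma bdd_lipschitzD f g : bdd_lipschitz f -> bdd_lipschitz g ->
  bdd_lipschitz (fun a b => f a b + g a b).
Proof.
move=> [M [L [M0 L0 hf]]] [M' [L' [M'0 L'0 hg]]].
exists (M + M'), (L + L'); split; rewrite ?addr_ge0 // => a b a' b'.
have [f_le f_lip] := hf a b a' b'; have [g_le g_lip] := hg a b a' b'.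
split; first by rewrite (le_trans (ler_normD _ _)) ?lerD.
have -> : f a b + g a b - (f a' b' + g a' b') =
  (f a b - f a' b') + (g a b - g a' b') by ring.
by rewrite (le_trans (ler_normD _ _)) // mulrDl lerD.
Qed.

Lemma bdd_lipschitzM f g : bdd_lipschitz f -> bdd_lipschitz g ->
  bdd_lipschitz (fun a b => f a b * g a b).
Proof.
move=> [M [L [M0 L0 hf]]] [M' [L' [M'0 L'0 hg]]].
exists (M * M'), (M * L' + M' * L); split; rewrite ?mulr_ge0 ?addr_ge0 ?mulr_ge0 //.
move=> a b a' b'; have [f_le f_lip] := hf a b a' b'; have [g_le g_lip] := hg a b a' b'.
have g'_le := (hg a' b' a b).1.
split; first by rewrite normrM ler_pM.
have -> : f a b * g a b - f a' b' * g a' b' =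
  f a b * (g a b - g a' b') + g a' b' * (f a b - f a' b') by ring.
rewrite (le_trans (ler_normD _ _)) // !normrM mulrDl -!mulrA.
by rewrite lerD ?ler_pM.
Qed.

Lemma bdd_lipschitz_sum (I : Type) (s : seq I) (F : I -> R -> R -> R) :
  (forall i, bdd_lipschitz (F i)) -> bdd_lipschitz (fun a b => \sum_(i <- s) F i a b).
Proof.
move=> hF; elim: s => [|i s IH].
  by apply: eq_bdd_lipschitz (bdd_lipschitz_cst 0) => a b; rewrite big_nil.
by apply: eq_bdd_lipschitz (bdd_lipschitzD (hF i) IH) => a b; rewrite big_cons.
Qed.

Lemma bdd_lipschitz_prod (I : Type) (s : seq I) (F : I -> R -> R -> R) :
  (forall i, bdd_lipschitz (F i)) -> bdd_lipschitz (fun a b => \prod_(i <- s) F i a b).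
Proof.
move=> hF; elim: s => [|i s IH].
  by apply: eq_bdd_lipschitz (bdd_lipschitz_cst 1) => a b; rewrite big_nil.
by apply: eq_bdd_lipschitz (bdd_lipschitzM (hF i) IH) => a b; rewrite big_cons.
Qed.

Lemma bdd_lipschitzX f n : bdd_lipschitz f -> bdd_lipschitz (fun a b => f a b ^+ n).
Proof.
move=> hf; apply: (@eq_bdd_lipschitz (fun a b => \prod_(i < n) f a b)).
  by move=> a b; rewrite prodr_const card_ord.
exact: bdd_lipschitz_prod.
Qed.

Lemma bdd_lipschitz_meval n (p : {mpoly R[n]}) (t : 'I_n -> R -> R -> R) :
  (forall i, bdd_lipschitz (t i)) -> bdd_lipschitz (fun a b => p.@[fun i => t i a b]).
Proof.
move=> ht; apply: eq_bdd_lipschitz; first by move=> a b; rewrite mevalE.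
apply: bdd_lipschitz_sum => m; apply: bdd_lipschitzM; first exact: bdd_lipschitz_cst.
by apply: bdd_lipschitz_prod => i; apply: bdd_lipschitzX.
Qed.

Lemma bdd_lipschitz_fst (f : R -> R) : (forall x, `|f x| <= 1) ->
  (forall x y, `|f x - f y| <= `|x - y|) -> bdd_lipschitz (fun a _ => f a).
Proof.
move=> f_le f_lip; exists 1, 1; split=> // a b a' b'; split=> //.
by rewrite mul1r (le_trans (f_lip a a')) // lerDl.
Qed.

Lemma bdd_lipschitz_snd (f : R -> R) : (forall x, `|f x| <= 1) ->
  (forall x y, `|f x - f y| <= `|x - y|) -> bdd_lipschitz (fun _ b => f b).
Proof.
move=> f_le f_lip; exists 1, 1; split=> // a b a' b'; split=> //.
by rewrite mul1r (le_trans (f_lip b b')) // lerDr.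
Qed.

Lemma bdd_lipschitz_cos_fst : bdd_lipschitz (fun a _ => cos a).
Proof. by apply: bdd_lipschitz_fst => [x|x y]; [exact: cos_max | exact: ler_dist_cos]. Qed.
Lemma bdd_lipschitz_sin_fst : bdd_lipschitz (fun a _ => sin a).
Proof. by apply: bdd_lipschitz_fst => [x|x y]; [exact: sin_max | exact: ler_dist_sin]. Qed.
Lemma bdd_lipschitz_cos_snd : bdd_lipschitz (fun _ b => cos b).
Proof. by apply: bdd_lipschitz_snd => [x|x y]; [exact: cos_max | exact: ler_dist_cos]. Qed.
Lemma bdd_lipschitz_sin_snd : bdd_lipschitz (fun _ b => sin b).
Proof. by apply: bdd_lipschitz_snd => [x|x y]; [exact: sin_max | exact: ler_dist_sin]. Qed.

Lemma bdd_lipschitz_uniform (I : finType) (F : I -> R -> R -> R) :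
  (forall i, bdd_lipschitz (F i)) ->
  exists M L : R, [/\ 0 < M, 0 <= L & forall i a b a' b', `|F i a b| <= M /\
    `|F i a b - F i a' b'| <= L * (`|a - a'| + `|b - b'|)].
Proof.
move=> hF.
have /choice [ML hML] : forall i, exists ML : R * R, [/\ 0 <= ML.1, 0 <= ML.2 &
    forall a b a' b', `|F i a b| <= ML.1 /\
      `|F i a b - F i a' b'| <= ML.2 * (`|a - a'| + `|b - b'|)].
  by move=> i; have [M [L hML]] := hF i; exists (M, L).
have le_sum (G : I -> R) j : (forall i, 0 <= G i) -> G j <= \sum_i G i.
  by move=> G_ge0; rewrite (bigD1 j) //= lerDl sumr_ge0.
have ML1_ge0 i : 0 <= (ML i).1 by case: (hML i).
have ML2_ge0 i : 0 <= (ML i).2 by case: (hML i).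
exists (1 + \sum_i (ML i).1), (\sum_i (ML i).2); split.
- by rewrite ltr_wpDr ?sumr_ge0.
- exact: sumr_ge0.
- move=> i a b a' b'; have [_ _ /(_ a b a' b') [F_le F_lip]] := hML i; split.
  + by rewrite (le_trans F_le) // ler_wpDl // le_sum.
  + by rewrite (le_trans F_lip) // ler_wpM2r ?addr_ge0 ?le_sum.
Qed.

End BoundedLipschitz.

Lemma detX (T : comNzRingType) n (A : 'M[T]_n) k : \det (A ^+ k) = \det A ^+ k.
Proof.
elim: k => [|k IH]; first by rewrite !expr0 det1.
by rewrite !exprS -mulmxE det_mulmx IH.
Qed.

Lemma det_mx22 (T : comNzRingType) (M : 'M[T]_2) : \det M = M 0 0 * M 1 1 - M 0 1 * M 1 0.
Proof.
rewrite (expand_det_row _ ord0) !big_ord_recr big_ord0 /= /cofactor !det_mx11 !mxE /=.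
rewrite add0r add0n expr0 expr1 mul1r mulN1r mulrN.
by congr (_ * _ - _ * _); apply: congr2; apply/val_inj.
Qed.

Lemma mulmx2E (T : pzSemiRingType) m n (A : 'M[T]_(m, 2)) (B : 'M[T]_(2, n)) i j :
  (A *m B) i j = A i 0 * B 0 j + A i 1 * B 1 j.
Proof.
rewrite mxE big_ord_recl big_ord1.
by congr (A i _ * B _ j + A i _ * B _ j); apply: val_inj.
Qed.

Lemma det2_col0_lower_bound (R : realFieldType) (M N : 'M[R]_2) (K K' : R) :
  0 < K -> 0 < K' -> \det M * \det N = 1 ->
  (forall i j, `|M i j| <= K) -> (forall i j, `|N i j| <= K') ->
  (K * (2 * K' ^+ 2))^-1 <= `|M 0 0| + `|M 1 0|.
Proof.
move=> K_gt0 K'_gt0 detMN M_le N_le.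
have detN_le : `|\det N| <= 2 * K' ^+ 2.
  rewrite det_mx22 (le_trans (ler_normB _ _)) // !normrM expr2.
  have := ler_pM (normr_ge0 _) (normr_ge0 _) (N_le 0 0) (N_le 1 1).
  have := ler_pM (normr_ge0 _) (normr_ge0 _) (N_le 0 1) (N_le 1 0).
  lra.
have detM_le : `|\det M| <= (`|M 0 0| + `|M 1 0|) * K.
  rewrite det_mx22 (le_trans (ler_normB _ _)) // !normrM.
  have := ler_wpM2l (normr_ge0 (M 0 0)) (M_le 1 1).
  have := ler_wpM2r (normr_ge0 (M 1 0)) (M_le 0 1).
  lra.
have one_le : 1 <= (`|M 0 0| + `|M 1 0|) * K * (2 * K' ^+ 2).
  by rewrite -{1}detMN (le_trans (ler_norm _)) // normrM ler_pM.
have pos : 0 < K * (2 * K' ^+ 2) by rewrite !mulr_gt0 // exprn_gt0.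
by rewrite -[_^-1]mul1r ler_pdivrMr // (mulrA _ K).
Qed.

Lemma polar_coords (R : realType) (x y : R) : 0 < `|x| + `|y| ->
  exists rho beta, [/\ 0 < rho, x = rho * cos beta & y = rho * sin beta].
Proof.
move=> xy_gt0; set rho := Num.sqrt (x ^+ 2 + y ^+ 2).
have sqr_gt0 : 0 < x ^+ 2 + y ^+ 2.
  rewrite -(real_normK (num_real x)) -(real_normK (num_real y)).
  move: xy_gt0 (normr_ge0 x) (normr_ge0 y); move: `|x| `|y| => X Y XY_gt0 X_ge0 Y_ge0.
  by have := mulr_gt0 XY_gt0 XY_gt0; nra.
have rho_gt0 : 0 < rho by rewrite sqrtr_gt0.
have rho2 : rho ^+ 2 = x ^+ 2 + y ^+ 2 by rewrite sqr_sqrtr // ltW.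
set c := x / rho.
have c2 : 1 - c ^+ 2 = (y / rho) ^+ 2.
  by rewrite /c !expr_div_n rho2; field; rewrite gt_eqF.
have c_itv : -1 <= c <= 1.
  have : c ^+ 2 <= 1 by rewrite -subr_ge0 c2 sqr_ge0.
  by move=> ?; apply/andP; split; nra.
have sin_acos_c : sin (acos c) = `|y| / rho.
  by rewrite sin_acos // c2 sqrtr_sqr normrM [`|rho^-1|]ger0_norm // invr_ge0 ltW.
have cos_acos_c : cos (acos c) = c by rewrite acosK // in_itv /=.
exists rho, (if 0 <= y then acos c else - acos c); split => //.
  by case: ifP; rewrite ?cosN cos_acos_c /c mulrC divfK // gt_eqF.
case: ifPn => y_ge0; first by rewrite sin_acos_c ger0_norm // mulrC divfK // gt_eqF.
by rewrite sinN sin_acos_c ltr0_norm ?ltNge // mulrN mulrC divfK ?opprK // gt_eqF.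
Qed.

Section TangentFrame.
Variable R : realType.

(* Spherical coordinates with poles (1, 0, 0) at [a = 0] and (-1, 0, 0) at
   [a = pi]; [tangent_frame a b] is an orthonormal basis of the tangent plane
   at [sphere_pt a b], defined also at the poles, where it rotates with [b]. *)
Definition sphere_pt (a b : R) : 'I_3 -> R :=
  fun i => nth 0 [:: cos a; sin a * cos b; sin a * sin b] i.

Definition tangent_frame (a b : R) : 'M[R]_(3, 2) := \matrix_(i < 3, k < 2)
  nth 0 (nth [::] [:: [:: sin a; 0]; [:: - (cos a * cos b); sin b];
                      [:: - (cos a * sin b); - cos b]] i) k.

Definition rot90 : 'M[R]_2 := \matrix_(i < 2, j < 2)
  nth 0 (nth [::] [:: [:: 0; 1]; [:: -1; 0]] i) j.

Lemma meval_sphere_pt a b :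
  [/\ (varx R).@[sphere_pt a b] = cos a, (vary R).@[sphere_pt a b] = sin a * cos b
    & (varz R).@[sphere_pt a b] = sin a * sin b].
Proof. by rewrite /varx /vary /varz !mevalXU /sphere_pt !inordK. Qed.

Lemma map_matA_sphere a b : map_mx (meval (sphere_pt a b)) (matA R) =
  \matrix_(i < 3, j < 3)
    nth 0 (nth [::] [:: [:: 0; sin a * sin b; - (sin a * cos b)];
                        [:: - (sin a * sin b); 0; cos a];
                        [:: sin a * cos b; - cos a; 0]] i) j.
Proof.
have [hx hy hz] := meval_sphere_pt a b.
apply/matrixP => i j; rewrite !mxE.
by case: i => [[|[|[|]]] ?] //; case: j => [[|[|[|]]] ?] //=;
  rewrite ?meval0 ?mevalN ?hx ?hy ?hz.
Qed.

Lemma map_matA_tangent_frame a b :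
  map_mx (meval (sphere_pt a b)) (matA R) *m tangent_frame a b = tangent_frame a b *m rot90.
Proof.
have ha := cos2Dsin2 a; have hb := cos2Dsin2 b.
have k1 : sin a * (cos b ^+ 2 + sin b ^+ 2) = sin a by rewrite hb mulr1.
have k2 : cos a * (cos b ^+ 2 + sin b ^+ 2) = cos a by rewrite hb mulr1.
have k3 : sin b * (cos a ^+ 2 + sin a ^+ 2) = sin b by rewrite ha mulr1.
have k4 : cos b * (cos a ^+ 2 + sin a ^+ 2) = cos b by rewrite ha mulr1.
rewrite map_matA_sphere; apply/matrixP => i k.
rewrite !mxE !big_ord_recr !big_ord0 /= !mxE.
by case: i => [[|[|[|]]] ?] //; case: k => [[|[|]] ?] //=; nra.
Qed.

Lemma tangent_frame_orthonormal a b : (tangent_frame a b)^T *m tangent_frame a b = 1%:M.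
Proof.
have ha := cos2Dsin2 a; have hb := cos2Dsin2 b.
apply/matrixP => i k; rewrite !mxE !big_ord_recr !big_ord0 /= !mxE.
by case: i => [[|[|]] ?] //; case: k => [[|[|]] ?] //=; nra.
Qed.

Lemma map_matAX_tangent_frame a b l :
  (tangent_frame a b)^T *m map_mx (meval (sphere_pt a b)) (matA R ^+ l)
    *m tangent_frame a b = rot90 ^+ l.
Proof.
rewrite rmorphXn /= -mulmxA.
suff -> : map_mx (meval (sphere_pt a b)) (matA R) ^+ l *m tangent_frame a b =
    tangent_frame a b *m rot90 ^+ l.
  by rewrite mulmxA tangent_frame_orthonormal mul1mx.
elim: l => [|l IH]; first by rewrite !expr0 mul1mx mulmx1.
by rewrite exprSr -mulmxE -mulmxA map_matA_tangent_frame mulmxA IH -mulmxA mulmxE -exprSr.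
Qed.

Lemma det_rot90X l : \det (rot90 ^+ l) = 1.
Proof.
suff det_rot90 : \det rot90 = 1 by rewrite detX det_rot90 expr1n.
by rewrite det_mx22 !mxE /=; ring.
Qed.

Definition rot (t : R) : 'M[R]_2 := \matrix_(i < 2, j < 2)
  nth 0 (nth [::] [:: [:: cos t; - sin t]; [:: sin t; cos t]] i) j.

Lemma sphere_pt_poles b : sphere_pt 0 b = sphere_pt 0 0 /\ sphere_pt pi b = sphere_pt pi 0.
Proof. by rewrite /sphere_pt sin0 sinpi !mul0r. Qed.

Lemma tangent_frame_poles b :
  (tangent_frame 0 b)^T = rot (- b) *m (tangent_frame 0 0)^T /\
  (tangent_frame pi b)^T = rot b *m (tangent_frame pi 0)^T.
Proof.
split; apply/matrixP => i k; rewrite !mxE !big_ord_recr big_ord0 /= !mxE;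
  rewrite ?sin0 ?cos0 ?sinpi ?cospi ?cosN ?sinN;
  by case: i => [[|[|]] ?] //; case: k => [[|[|[|]]] ?] //=; ring.
Qed.

End TangentFrame.
Arguments rot90 {R}.

Lemma rot_col_polar (R : realType) q (M : 'M[R]_(2, q)) j :
  0 < `|M 0 j| + `|M 1 j| -> exists rho beta, 0 < rho /\ forall t,
    ((rot t *m M) 0 j, (rot t *m M) 1 j) = (rho * cos (beta + t), rho * sin (beta + t)).
Proof.
move=> /polar_coords [rho [beta [rho_gt0 hx hy]]]; exists rho, beta; split=> // t.
by rewrite !mulmx2E hx hy !mxE /= cosD sinD; congr pair; ring.
Qed.

Section SphereRestriction.
Variable R : realType.
Local Notation P := {mpoly R[3]}.

(* [U] evaluated at [sphere_pt a b] followed by the orthogonal projection onto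
   the tangent plane, resp. [V] evaluated there and restricted to that plane,
   in the coordinates given by [tangent_frame a b]. *)
Definition tangent_proj q (U : 'M[P]_(3, q)) a b : 'M[R]_(2, q) :=
  (tangent_frame a b)^T *m map_mx (meval (sphere_pt a b)) U.

Definition tangent_restr q (V : 'M[P]_(q, 3)) a b : 'M[R]_(q, 2) :=
  map_mx (meval (sphere_pt a b)) V *m tangent_frame a b.

Lemma tangent_proj_restr q l (U : 'M[P]_(3, q)) (V : 'M[P]_(q, 3)) a b :
  matA R ^+ l = U *m V -> tangent_proj U a b *m tangent_restr V a b = rot90 ^+ l.
Proof.
move=> AUV; rewrite /tangent_proj /tangent_restr mulmxA -(mulmxA _ (map_mx _ U)).
by rewrite -map_mxM -AUV map_matAX_tangent_frame.
Qed.

Lemma shift_factor_dim_ge2 q l (U : 'M[P]_(3, q)) (V : 'M[P]_(q, 3)) :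
  matA R ^+ l = U *m V -> (2 <= q)%N.
Proof.
move=> AUV; have := mxrankM_maxl (tangent_proj U 0 0) (tangent_restr V 0 0).
rewrite (tangent_proj_restr _ _ AUV) mxrank_unit ?unitmxE ?det_rot90X ?unitr1 //.
by move/leq_trans; apply; apply: rank_leq_col.
Qed.

Lemma bdd_lipschitz_sphere_pt i : bdd_lipschitz (fun a b : R => sphere_pt a b i).
Proof.
case: i => [[|[|[|]]] ?] //; rewrite /sphere_pt /=.
- exact: bdd_lipschitz_cos_fst.
- exact: bdd_lipschitzM bdd_lipschitz_sin_fst bdd_lipschitz_cos_snd.
- exact: bdd_lipschitzM bdd_lipschitz_sin_fst bdd_lipschitz_sin_snd.
Qed.

Lemma bdd_lipschitz_tangent_frame i k : bdd_lipschitz (fun a b : R => tangent_frame a b i k).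
Proof.
apply: eq_bdd_lipschitz; first by move=> a b; rewrite mxE.
case: i => [[|[|[|]]] ?] //; case: k => [[|[|]] ?] //=.
- exact: bdd_lipschitz_sin_fst.
- exact: bdd_lipschitz_cst.
- exact: bdd_lipschitzN (bdd_lipschitzM bdd_lipschitz_cos_fst bdd_lipschitz_cos_snd).
- exact: bdd_lipschitz_sin_snd.
- exact: bdd_lipschitzN (bdd_lipschitzM bdd_lipschitz_cos_fst bdd_lipschitz_sin_snd).
- exact: bdd_lipschitzN bdd_lipschitz_cos_snd.
Qed.

Lemma bdd_lipschitz_meval_sphere (p : P) : bdd_lipschitz (fun a b => p.@[sphere_pt a b]).
Proof. exact: bdd_lipschitz_meval bdd_lipschitz_sphere_pt. Qed.

Lemma bdd_lipschitz_tangent_proj q (U : 'M[P]_(3, q)) i j :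
  bdd_lipschitz (fun a b => tangent_proj U a b i j).
Proof.
apply: (@eq_bdd_lipschitz _
  (fun a b => \sum_k tangent_frame a b k i * (U k j).@[sphere_pt a b])).
  by move=> a b; rewrite mxE; apply: eq_bigr => k _; rewrite !mxE.
apply: bdd_lipschitz_sum => k; apply: bdd_lipschitzM.
  exact: bdd_lipschitz_tangent_frame.
exact: bdd_lipschitz_meval_sphere.
Qed.

Lemma bdd_lipschitz_tangent_restr q (V : 'M[P]_(q, 3)) i j :
  bdd_lipschitz (fun a b => tangent_restr V a b i j).
Proof.
apply: (@eq_bdd_lipschitz _
  (fun a b => \sum_k (V i k).@[sphere_pt a b] * tangent_frame a b k j)).
  by move=> a b; rewrite mxE; apply: eq_bigr => k _; rewrite !mxE.
apply: bdd_lipschitz_sum => k; apply: bdd_lipschitzM.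
  exact: bdd_lipschitz_meval_sphere.
exact: bdd_lipschitz_tangent_frame.
Qed.

Lemma tangent_proj_poles q (U : 'M[P]_(3, q)) b :
  tangent_proj U 0 b = rot (- b) *m tangent_proj U 0 0 /\
  tangent_proj U pi b = rot b *m tangent_proj U pi 0.
Proof.
have [pt0 ptpi] := sphere_pt_poles b; have [fr0 frpi] := tangent_frame_poles b.
by rewrite /tangent_proj pt0 ptpi fr0 frpi !mulmxA.
Qed.

Lemma tangent_proj_2pi q (U : 'M[P]_(3, q)) a : tangent_proj U a (pi *+ 2) = tangent_proj U a 0.
Proof.
rewrite /tangent_proj.
have -> : sphere_pt a (pi *+ 2) = sphere_pt a 0 by rewrite /sphere_pt cos2pi sin2pi cos0 sin0.
have -> : tangent_frame a (pi *+ 2) = tangent_frame a 0.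
  by apply/matrixP => i k; rewrite !mxE cos2pi sin2pi cos0 sin0.
by [].
Qed.

End SphereRestriction.

Section HairyBall.
Variables (R : realType) (v : R -> R -> R * R) (m L : R).
Hypothesis v_ge : forall a b, m <= `|(v a b).1| + `|(v a b).2|.
Hypothesis v_lip : forall a b a' b',
  `|(v a b).1 - (v a' b').1| <= L * (`|a - a'| + `|b - b'|) /\
  `|(v a b).2 - (v a' b').2| <= L * (`|a - a'| + `|b - b'|).

Lemma lipschitz_const_ge0 : 0 <= L.
Proof.
have := (v_lip 1 0 0 0).1; rewrite subr0 normr1 subrr normr0 addr0 mulr1.
exact: le_trans.
Qed.

Lemma dot_gt0_close (h a b a' b' : R) : 2 * (L * (3 * h)) < m ->
  `|a - a'| <= h -> `|b - b'| <= 2 * h -> 0 < dot (v a b) (v a' b').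
Proof.
move=> e_lt ha hb; have [l1 l2] := v_lip a' b' a b.
have d3 : L * (`|a' - a| + `|b' - b|) <= L * (3 * h).
  by rewrite ler_wpM2l ?lipschitz_const_ge0 // distrC [`|b' - _|]distrC; lra.
exact: dot_gt0_near e_lt (v_ge a b) (le_trans l1 d3) (le_trans l2 d3).
Qed.

(* The hairy ball theorem, for a field [v] written in spherical coordinates in
   the frame [tangent_frame]: sampled on a fine grid of [0, pi] x [0, 2 pi],
   its winding along [b] is -1 at the pole [a = 0] and +1 at [a = pi], while
   a Lipschitz field bounded away from 0 has the same winding on every row. *)
Lemma hairy_ball_spherical (rho beta rho' beta' : R) :
  0 < m -> 0 < rho -> 0 < rho' ->
  (forall a, v a (pi *+ 2) = v a 0) ->
  (forall b, v 0 b = (rho * cos (beta - b), rho * sin (beta - b))) ->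
  (forall b, v pi b = (rho' * cos (beta' + b), rho' * sin (beta' + b))) ->
  False.
Proof.
move=> m_gt0 rho_gt0 rho'_gt0 v_per v_0 v_pi; have pi_gt0 := @pi_gt0 R.
have [N [N_gt N_gt4]] : exists N : nat, 6 * L * pi / m < N%:R /\ (4 < N)%N.
  exists (5 + Num.truncn (6 * L * pi / m))%N; split; last by rewrite ltn_addr.
  by rewrite (lt_le_trans (truncnS_gt _)) // ler_nat addnC addnS ltnS leq_addr.
have N_gt0 : 0 < N%:R :> R by rewrite ltr0n (ltn_trans _ N_gt4).
pose h : R := pi / N%:R.
have h_gt0 : 0 < h by rewrite divr_gt0.
have h2_ge0 : 0 <= 2 * h by rewrite mulr_ge0 // ltW.
have Nh : N%:R * h = pi by rewrite /h mulrC divfK // gt_eqF.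
have N2h : N%:R * (2 * h) = pi *+ 2 by rewrite mulrCA Nh mulr2n; ring.
have h_lt : 2 * h < pi / 2.
  have : 4 < N%:R :> R by rewrite ltr_nat.
  by move: Nh; nra.
have e_lt : 2 * (L * (3 * h)) < m.
  rewrite ltr_pdivrMr // -Nh in N_gt.
  by move: N_gt; nra.
pose P (i j : nat) := v (j%:R * h) (i%:R * (2 * h)).
have := @grid_turns _ N P.
have -> : \sum_(i < N) turn (P i 0%N) (P i.+1 0%N) = 4 * -1.
  have shift k : beta - k%:R * (2 * h) = beta + k%:R * - (2 * h) by rewrite mulrN.
  rewrite /P mul0r; under eq_bigr => i _ do rewrite !v_0 !shift.
  apply: circle_turns => //; first by rewrite normrN ger0_norm.
  by rewrite mulrN N2h.
have -> : \sum_(i < N) turn (P i N) (P i.+1 N) = 4 * 1.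
  rewrite /P Nh; under eq_bigr => i _ do rewrite !v_pi.
  by apply: circle_turns => //; rewrite ?N2h ?ger0_norm.
have step (k : nat) (c : R) : 0 <= c ->
    `|k.+1%:R * c - k%:R * c| = c /\ `|k%:R * c - k.+1%:R * c| = c.
  move=> c_ge0; have -> : k.+1%:R * c - k%:R * c = c by rewrite -natr1; ring.
  by rewrite distrC -natr1 [_ - _](_ : _ = c) ?ger0_norm //; ring.
have cells i j : (i < N)%N -> (j < N)%N ->
    [/\ 0 < dot (P i j) (P i.+1 j), 0 < dot (P i.+1 j) (P i.+1 j.+1),
        0 < dot (P i.+1 j.+1) (P i j.+1), 0 < dot (P i j.+1) (P i j) &
        0 < dot (P i j) (P i.+1 j.+1)].
  move=> _ _; have [s1 s2] := step j h (ltW h_gt0); have [t1 t2] := step i _ h2_ge0.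
  by split; apply: (dot_gt0_close e_lt); rewrite ?subrr ?normr0 ?s1 ?s2 ?t1 ?t2 ?(ltW h_gt0).
have per j : P N j = P 0%N j by rewrite /P N2h mul0r v_per.
by move=> /(_ cells per)/eqP.
Qed.

End HairyBall.

Section MatAOverFractions.
Variable R : realType.
Local Notation P := {mpoly R[3]}.

Definition xyz_row : 'rV[P]_3 := \row_(j < 3) nth 0 [:: varx R; vary R; varz R] j.

Lemma xyz_row_matA : xyz_row *m matA R = 0.
Proof.
apply/rowP => j; rewrite !mxE !big_ord_recr big_ord0 /= !mxE.
by case: j => [[|[|[|]]] ?] //=; ring.
Qed.

Lemma varx_neq0 : varx R != 0.
Proof.
apply/negP => /eqP x0; have [+ _ _] := meval_sphere_pt (0 : R) 0.
by rewrite x0 meval0 cos0 => /eqP; rewrite eq_sym oner_eq0.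
Qed.

Lemma nonsingular_shift_dim_le2 q l (B : 'M[P]_q) (U : 'M[P]_(3, q)) (V : 'M[P]_(q, 3)) :
  \det B != 0 -> matA R *m U = U *m B -> B ^+ l = V *m U -> (q <= 2)%N.
Proof.
move=> detB AU_UB Bl_VU.
have xyzU : xyz_row *m U = 0.
  have xyzUB : xyz_row *m U *m B = 0.
    by rewrite -mulmxA -AU_UB mulmxA xyz_row_matA mul0mx.
  have : xyz_row *m U *m (B *m \adj B) = 0 by rewrite mulmxA xyzUB mul0mx.
  rewrite mul_mx_adj mul_mx_scalar => /eqP; rewrite scalemx_eq0 (negbTE detB) /=.
  by move/eqP.
pose f := @FracField.tofrac P.
have xyz_neq0 : map_mx f xyz_row != 0.
  apply/negP => /eqP /rowP /(_ 0); rewrite !mxE /= => /eqP.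
  by rewrite tofrac_eq0 (negbTE varx_neq0).
have rankU : (\rank (map_mx f U) <= 2)%N.
  have : (map_mx f xyz_row <= kermx (map_mx f U))%MS.
    by apply/sub_kermxP; rewrite -map_mxM xyzU map_mx0.
  move/mxrankS; rewrite mxrank_ker rank_rV xyz_neq0 => h.
  by have := rank_leq_col (map_mx f U); lia.
have := mxrankM_maxr (map_mx f V) (map_mx f U).
rewrite -map_mxM -Bl_VU mxrank_unit; first by move/leq_trans; apply.
by rewrite unitmxE det_map_mx unitfE detX tofrac_eq0 expf_neq0.
Qed.

Lemma matAX_neq0 k : matA R ^+ k != 0.
Proof.
apply/negP => /eqP Ak0; have := map_matAX_tangent_frame (0 : R) 0 k.
rewrite Ak0 map_mx0 mulmx0 mul0mx => /(congr1 determinant).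
by rewrite det0 det_rot90X => /eqP; rewrite eq_sym oner_eq0.
Qed.

End MatAOverFractions.

Section TwoDimensionalFactor.
Variable R : realType.
Local Notation P := {mpoly R[3]}.

Lemma shift_factor_dim_neq2 l (U : 'M[P]_(3, 2)) (V : 'M[P]_(2, 3)) :
  matA R ^+ l = U *m V -> False.
Proof.
move=> AUV.
have [KW [LW [KW_gt0 _ hW]]] := bdd_lipschitz_uniform
  (fun ij : 'I_2 * 'I_2 => bdd_lipschitz_tangent_proj U ij.1 ij.2).
have [KZ [LZ [KZ_gt0 _ hZ]]] := bdd_lipschitz_uniform
  (fun ij : 'I_2 * 'I_2 => bdd_lipschitz_tangent_restr V ij.1 ij.2).
set m := (KW * (2 * KZ ^+ 2))^-1.
have m_gt0 : 0 < m by rewrite invr_gt0 !mulr_gt0 ?exprn_gt0.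
have W_ge a b : m <= `|tangent_proj U a b 0 0| + `|tangent_proj U a b 1 0|.
  apply: (det2_col0_lower_bound (N := tangent_restr V a b)) => // [|i j|i j].
  - by rewrite -det_mulmx (tangent_proj_restr _ _ AUV) det_rot90X.
  - exact: (hW (i, j) a b a b).1.
  - exact: (hZ (i, j) a b a b).1.
have [rho [beta [rho_gt0 W0]]] := rot_col_polar (lt_le_trans m_gt0 (W_ge 0 0)).
have [rho' [beta' [rho'_gt0 Wpi]]] := rot_col_polar (lt_le_trans m_gt0 (W_ge pi 0)).
apply: (@hairy_ball_spherical R (fun a b => (tangent_proj U a b 0 0, tangent_proj U a b 1 0))
  m LW W_ge _ rho beta rho' beta') => //.
- by move=> a b a' b'; split; [exact: (hW (0, 0) _ _ _ _).2 | exact: (hW (1, 0) _ _ _ _).2].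
- by move=> a; rewrite tangent_proj_2pi.
- by move=> b; have [-> _] := tangent_proj_poles U b; rewrite W0.
- by move=> b; have [_ ->] := tangent_proj_poles U b; rewrite Wpi.
Qed.

End TwoDimensionalFactor.

Theorem theorem1p2 (R : realType) :
  (forall (q : nat) (B : 'M[{mpoly R[3]}]_q),
      nonsingular B -> ~ alg_shift_equiv (matA R) B)
  /\ (forall k : nat, matA R ^+ k != 0).
Proof.
split=> [q B detB [l [U [V [AU_UB _ Al_UV Bl_VU]]]] | k]; last exact: matAX_neq0.
have q_le2 := nonsingular_shift_dim_le2 detB AU_UB Bl_VU.
have q_ge2 := shift_factor_dim_ge2 Al_UV.
have q2 : q = 2%N by apply/eqP; rewrite eqn_leq q_le2 q_ge2.
by subst q; apply: shift_factor_dim_neq2 Al_UV.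
Qed.
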